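(* Let $O_1,\ldots,O_n$ be trajectories of the longitudinal data, $P_n$ their empirical measure, and, for each trajectory, let $\hat Q_{t,\varepsilon}$, $\hat V_{t,\varepsilon}$, $I_t(\hat\pi)$ and the partial loss $\mathcal{L}^\star(\hat{Q}_\varepsilon,\hat{V}_{\varepsilon'};\hat\pi)=\sum_{t=1}^T I_t(\hat\pi)\mathcal{L}_{\mathrm{bce}}(\hat{Q}_{t,\varepsilon},\hat{V}_{t+1,\varepsilon'})$ be as defined in the context. Suppose $\varepsilon^\star$ satisfies $$\frac{\partial}{\partial\varepsilon}\Big|_{\varepsilon=\varepsilon^\star}P_n\mathcal{L}^\star(\hat{Q}_\varepsilon,\hat{V}_{\varepsilon^\star};\hat\pi)=0.$$ Then $\hat Q_{\varepsilon^\star}$ solves the efficient influence function equation: $P_nD^\star(\hat{Q}_{\varepsilon^\star},\hat\pi)=0$, where $D^\star(\hat Q_{\varepsilon^\star},\hat\pi)=(\hat V_{1,\varepsilon^\star}-\hat\psi^\star_n)+\sum_{t=1}^T I_t(\hat\pi)(\hat V_{t+1,\varepsilon^\star}-\hat Q_{t,\varepsilon^\star})$ with the plug-in value $\hat\psi^\star_n=P_n\hat V_{1,\varepsilon^\star}$.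
   Context: Longitudinal data $O=(W,L_1,A_1,Y_1,\ldots,L_\tau,A_\tau,Y_\tau)$ with stopping time $T\le\tau$, final outcome $Y_T\in[0,1]$, $pa(A_t)=(W,L_{1:t},A_{1:t-1},Y_{1:t-1})$, $pa(Y_t)=(pa(A_t),A_t)$. $g=(g_t)$ is a user-specified treatment policy and $\hat\pi=(\hat\pi_t)$ estimated treatment mechanisms with $g_t\ll\hat\pi_t$; $I_t(\hat\pi)=\prod_{s=1}^t dg_s/d\hat\pi_s(O)$. $\hat Q_t$ are $(0,1)$-valued functions of $pa(Y_t)$; $\operatorname{logit}\hat Q_{t,\varepsilon}=\operatorname{logit}\hat Q_t+\varepsilon$ with a single $\varepsilon\in\mathbb{R}$; $\hat V_{t,\varepsilon}=\mathbb{E}_{A_t\sim g_t}[\hat Q_{t,\varepsilon}]$ for $t\le T$ and $\hat V_{T+1,\varepsilon}=Y_T$; $\mathcal{L}_{\mathrm{bce}}(\hat y,y)=-[y\log\hat y+(1-y)\log(1-\hat y)]$. $Pf=\int f\,dP$. *)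

From HB Require Import structures.
From mathcomp Require Import all_boot all_order all_algebra.
From mathcomp Require Import all_classical all_reals all_analysis.
Set Implicit Arguments. Unset Strict Implicit. Unset Printing Implicit Defensive.
Import Order.TTheory GRing.Theory Num.Theory.
Local Open Scope ring_scope.

Section TMLE.
Variable R : realType.

Definition logit (x : R) : R := ln (x / (1 - x)).
Definition sigmoid (x : R) : R := (1 + expR (- x))^-1.

Definition bce (yhat y : R) : R := - (y * ln yhat + (1 - y) * ln (1 - yhat)).

Definition Pn (Obs : Type) (n : nat) (O : 'I_n -> Obs) (f : Obs -> R) : R :=
  n%:R^-1 * \sum_(i < n) f (O i).

Variables (d : measure_display) (A : measurableType d) (H Obs : Type).
(* H : type of the parent sets pa(A_t); A : treatment space *)
Variables (hist : nat -> Obs -> H) (act : nat -> Obs -> A).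
Variables (T : Obs -> nat) (Y : Obs -> R).
Variables (Qhat : nat -> H -> A -> R).
Variable (g : nat -> H -> probability A R).
Variable (ratio : nat -> H -> A -> R).            (* dg_t / dpihat_t *)

Definition Qeps (t : nat) (eps : R) (h : H) (a : A) : R :=
  sigmoid (logit (Qhat t h a) + eps).

Definition Veps (t : nat) (eps : R) (o : Obs) : R :=
  if (t <= T o)%N then
    Rintegral (g t (hist t o)) setT (fun a => Qeps t eps (hist t o) a)
  else Y o.

Definition Iw (t : nat) (o : Obs) : R :=
  \prod_(1 <= s < t.+1) ratio s (hist s o) (act s o).

Definition Lstar (eps eps' : R) (o : Obs) : R :=
  \sum_(1 <= t < (T o).+1)
     Iw t o * bce (Qeps t eps (hist t o) (act t o)) (Veps t.+1 eps' o).

Definition Dstar (eps psi : R) (o : Obs) : R :=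
  (Veps 1 eps o - psi)
  + \sum_(1 <= t < (T o).+1)
      Iw t o * (Veps t.+1 eps o - Qeps t eps (hist t o) (act t o)).

End TMLE.

From HB Require Import structures.
From mathcomp Require Import all_boot all_order all_algebra.
From mathcomp Require Import all_classical all_reals all_analysis.
From mathcomp Require Import ring.
Import Order.TTheory GRing.Theory Num.Theory.
Local Open Scope ring_scope.
Local Open Scope classical_set_scope.
Set Implicit Arguments. Unset Strict Implicit.

(* Since logit Q_{t,eps} = logit Q_t + eps, the derivative in eps of
   bce (Q_{t,eps}) v is Q_{t,eps} - v.  Hence the score equation at eps* says
   that P_n sum_t I_t (Q_{t,eps*} - V_{t+1,eps*}) = 0, which is minus the
   empirical mean of the sum part of D*; the remaining part V_{1,eps*} - psi
   has empirical mean zero because psi is the plug-in P_n V_{1,eps*}. *)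

Section LogisticScore.
Variable R : realType.
Implicit Types x y z e : R.

Lemma bce_sigmoid z y : bce (sigmoid z) y = ln (1 + expR (- z)) + (1 - y) * z.
Proof.
rewrite /bce /sigmoid.
have expN_gt0 : 0 < expR (- z) := expR_gt0 _.
have den_gt0 : 0 < 1 + expR (- z) by rewrite addr_gt0.
have -> : 1 - (1 + expR (- z))^-1 = expR (- z) * (1 + expR (- z))^-1.
  by field; rewrite gt_eqF.
rewrite lnM ?posrE ?invr_gt0 // lnV ?posrE // expRK.
ring.
Qed.

Lemma is_derive_ln1p_expN z :
  is_derive z 1 (fun u => ln (1 + expR (- u))) (sigmoid z - 1).
Proof.
have den_gt0 : 0 < 1 + expR (- z) by rewrite addr_gt0 ?expR_gt0.
have dexpN : is_derive z 1 (fun u => expR (- u)) (expR (- z) * - 1).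
  exact: (is_derive1_comp (f := expR) (g := -%R)).
have dden : is_derive z 1 (fun u => 1 + expR (- u)) (0 + expR (- z) * - 1).
  exact: is_deriveD.
apply: is_derive_eq
  (is_derive1_comp (f := @ln R) (g := fun u => 1 + expR (- u)) (is_derive1_ln den_gt0) dden) _.
by rewrite /sigmoid; field; rewrite gt_eqF.
Qed.

Lemma is_derive_bce_sigmoid z y :
  is_derive z 1 (fun u => bce (sigmoid u) y) (sigmoid z - y).
Proof.
have dlin : is_derive z 1 (fun u => (1 - y) * u) (1 - y).
  by apply: is_derive_eq (is_deriveZ (1 - y) (is_derive_id z 1)) _; rewrite scaler1.
under eq_fun do rewrite bce_sigmoid.
by apply: is_derive_eq (is_deriveD (is_derive_ln1p_expN z) dlin) _; rewrite addrA subrK.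
Qed.

Lemma is_derive_bce_sigmoid_shift x e y :
  is_derive e 1 (fun u => bce (sigmoid (x + u)) y) (sigmoid (x + e) - y).
Proof.
have dshift : is_derive e 1 (fun u => x + u) (0 + 1).
  exact: is_deriveD.
apply: is_derive_eq
  (is_derive1_comp (g := fun u => x + u) (is_derive_bce_sigmoid (x + e) y) dshift) _.
by rewrite add0r mulr1.
Qed.

End LogisticScore.

Lemma is_derive_big_sum (R : numFieldType) (V W : normedModType R) (I : Type)
    (r : seq I) (P : pred I) (h : I -> V -> W) (dh : I -> W) (x v : V) :
  (forall i, is_derive x v (h i) (dh i)) ->
  is_derive x v (fun y => \sum_(i <- r | P i) h i y) (\sum_(i <- r | P i) dh i).
Proof.
move=> dh_h; elim: r => [|a r IHr].
  by under eq_fun do rewrite big_nil; rewrite big_nil; exact: is_derive_cst.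
under eq_fun do rewrite big_cons; rewrite big_cons.
by case: (P a) => //; exact: is_deriveD.
Qed.

Lemma is_derive_unique (R : numFieldType) (V W : normedModType R)
    (f : V -> W) (x v : V) (df1 df2 : W) :
  is_derive x v f df1 -> is_derive x v f df2 -> df1 = df2.
Proof. by move=> [_ <-] [_ <-]. Qed.

Section EmpiricalMeasure.
Variables (R : realType) (Obs : Type) (n : nat) (O : 'I_n -> Obs).
Implicit Types f g : Obs -> R.

Lemma eq_Pn f g : f =1 g -> Pn O f = Pn O g.
Proof. by move=> fg; rewrite /Pn (eq_bigr _ (fun i _ => fg (O i))). Qed.

Lemma PnB f g : Pn O (fun o => f o - g o) = Pn O f - Pn O g.
Proof. by rewrite /Pn sumrB mulrBr. Qed.

Lemma Pn_cst (c : R) : (0 < n)%N -> Pn O (fun=> c) = c.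
Proof.
move=> n_gt0; rewrite /Pn sumr_const card_ord -[c *+ n]mulr_natl mulrA mulVf ?mul1r //.
by rewrite pnatr_eq0 -lt0n.
Qed.

Lemma is_derive_Pn (F : R -> Obs -> R) (dF : Obs -> R) (x : R) :
  (forall o, is_derive x 1 (F^~ o) (dF o)) ->
  is_derive x 1 (fun e => Pn O (F e)) (Pn O dF).
Proof.
move=> dF_F; rewrite /Pn.
exact: is_deriveZ (is_derive_big_sum _ _ (fun i => dF_F (O i))).
Qed.

End EmpiricalMeasure.

Section Targeting.
Variables (R : realType) (d : measure_display) (A : measurableType d) (H Obs : Type).
Variables (hist : nat -> Obs -> H) (act : nat -> Obs -> A).
Variables (T : Obs -> nat) (Y : Obs -> R) (Qhat : nat -> H -> A -> R).
Variables (g : nat -> H -> probability A R) (ratio : nat -> H -> A -> R).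

Definition Lstar_score (eps eps' : R) (o : Obs) : R :=
  \sum_(1 <= t < (T o).+1) Iw hist act ratio t o *
    (Qeps Qhat t eps (hist t o) (act t o) - Veps hist T Y Qhat g t.+1 eps' o).

Lemma is_derive_bce_Qeps t h a (y e : R) :
  is_derive e 1 (fun eps => bce (Qeps Qhat t eps h a) y) (Qeps Qhat t e h a - y).
Proof. exact: is_derive_bce_sigmoid_shift. Qed.

Lemma is_derive_Lstar (e e' : R) o :
  is_derive e 1 (fun eps => Lstar hist act T Y Qhat g ratio eps e' o)
    (Lstar_score e e' o).
Proof.
apply: is_derive_big_sum => t.
exact: is_deriveZ (is_derive_bce_Qeps _ _ _ _ _).
Qed.

Lemma Dstar_Lstar_score (eps psi : R) o :
  Dstar hist act T Y Qhat g ratio eps psi o =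
  Veps hist T Y Qhat g 1 eps o - psi - Lstar_score eps eps o.
Proof.
rewrite /Dstar /Lstar_score -sumrN; congr (_ + _).
by apply: eq_bigr => t _; rewrite -mulrN opprB.
Qed.

End Targeting.

Theorem corollary4p3 (R : realType) (d : measure_display) (A : measurableType d)
  (H Obs : Type) (tau : nat)
  (hist : nat -> Obs -> H) (act : nat -> Obs -> A)
  (T : Obs -> nat) (Y : Obs -> R)
  (Qhat : nat -> H -> A -> R)
  (g pihat : nat -> H -> probability A R)
  (ratio : nat -> H -> A -> R)
  (n : nat) (O : 'I_n -> Obs) (estar : R) :
  (0 < n)%N ->
  (forall o, (T o <= tau)%N) ->
  (forall o, 0 <= Y o <= 1) ->
  (forall t h a, 0 < Qhat t h a < 1) ->
  (forall t h, measurable_fun setT (Qhat t h)) ->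
  (* g_t << pihat_t with Radon-Nikodym derivative ratio t h = dg_t/dpihat_t *)
  (forall t h, measurable_fun setT (ratio t h)) ->
  (forall t h a, 0 <= ratio t h a) ->
  (forall t h (B : set A), measurable B ->
      g t h B = (\int[pihat t h]_(a in B) (ratio t h a)%:E)%E) ->
  is_derive estar 1
    (fun eps => Pn O (Lstar hist act T Y Qhat g ratio eps estar)) 0 ->
  Pn O (Dstar hist act T Y Qhat g ratio estar
          (Pn O (Veps hist T Y Qhat g 1 estar))) = 0.
Proof.
move=> n_gt0 _ _ _ _ _ _ _ score_eq.
have dLstar := is_derive_Pn O (is_derive_Lstar hist act T Y Qhat g ratio estar estar).
have score0 : Pn O (Lstar_score hist act T Y Qhat g ratio estar estar) = 0.
  exact: is_derive_unique dLstar score_eq.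
rewrite (eq_Pn O (Dstar_Lstar_score hist act T Y Qhat g ratio estar _)).
by rewrite !PnB Pn_cst // score0 subrr subr0.
Qed.
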